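(* Let $\Theta$ be a causal theory over $\mathfrak L$. For every $M\in\mathfrak M$ (identified with the set of $\mathfrak L$-sentences true in $M$) and every $p\in\mathcal L_\Box$, either $M\vdash_\Box p$ or $M\vdash_\Box\neg p$ is derivable in $\mathbf S_\Theta$.
   Context: $\mathfrak L$ is a classical propositional language; $\mathfrak M$ is the set of its models, each identified with the maximal classically consistent set of $\mathfrak L$-sentences true in it. A causal rule is $\phi\triangleright\psi$ with $\phi,\psi\in\mathfrak L$; a causal theory $\Theta$ is a set of causal rules. $\mathcal L_\Box$ is generated by $\mathfrak L$ and a unary $\Box$. The sequent calculus $\mathbf S_\Theta$ derives sequents $\Gamma\vdash_\Box\Delta$ (collections of $\mathcal L_\Box$-formulas, possibly infinite; derivations well-founded, possibly infinitely branching) via: axiom $p\vdash_\Box p$; $\perp\vdash_\Box$; $\vdash_\Box\top$; weakening and contraction on both sides; classical two-sided LK rules for $\neg,\wedge,\vee,\to$ with shared contexts; $\Box$R: if $\phi_1\triangleright\psi_1,\dots,\phi_k\triangleright\psi_k\in\Theta$ and $\psi_1,\dots,\psi_k\vdash_\Box p$ is derivable, from $\Gamma\vdash_\Box\phi_1\wedge\dots\wedge\phi_k,\Delta$ infer $\Gamma\vdash_\Box\Box p,\Delta$; $\Box$L: letting $\{S_j\}_{j\in J}$ be all finite $S_j\subseteq\Theta$ with $\{\psi:\phi\triangleright\psi\in S_j\}\vdash_\Box p$ derivable, from $\Gamma,\{\phi:\phi\triangleright\psi\in S_j\}\vdash_\Box\Delta$ for all $j\in J$ infer $\Gamma,\Box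 p\vdash_\Box\Delta$; multicut: from $\Gamma\vdash_\Box p^m,\Delta$ and $\Gamma',p^n\vdash_\Box\Delta'$ ($m,n>0$) infer $\Gamma,\Gamma'\vdash_\Box\Delta,\Delta'$. *)

From Stdlib Require Import List Arith.
Import ListNotations.

Inductive LF (A : Type) : Type :=
| FAtom : A -> LF A
| FBot : LF A
| FTop : LF A
| FNeg : LF A -> LF A
| FAnd : LF A -> LF A -> LF A
| FOr : LF A -> LF A -> LF A
| FImp : LF A -> LF A -> LF A.
Arguments FBot {A}. Arguments FTop {A}.

Inductive LB (A : Type) : Type :=
| BAtom : A -> LB A
| BBot : LB A
| BTop : LB A
| BNeg : LB A -> LB A
| BAnd : LB A -> LB A -> LB A
| BOr : LB A -> LB A -> LB A
| BImp : LB A -> LB A -> LB A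
| BBox : LB A -> LB A.
Arguments BBot {A}. Arguments BTop {A}.
Arguments BAtom {A}. Arguments BNeg {A}. Arguments BAnd {A}.
Arguments BOr {A}. Arguments BImp {A}. Arguments BBox {A}.
Arguments FAtom {A}. Arguments FNeg {A}. Arguments FAnd {A}.
Arguments FOr {A}. Arguments FImp {A}.

Fixpoint emb {A : Type} (f : LF A) : LB A :=
  match f with
  | FAtom a => BAtom a
  | FBot => BBot
  | FTop => BTop
  | FNeg f => BNeg (emb f)
  | FAnd f g => BAnd (emb f) (emb g)
  | FOr f g => BOr (emb f) (emb g)
  | FImp f g => BImp (emb f) (emb g)
  end.

Fixpoint evalF {A : Type} (v : A -> bool) (f : LF A) : bool :=
  match f with
  | FAtom a => v a
  | FBot => false
  | FTop => true
  | FNeg f => negb (evalF v f)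
  | FAnd f g => evalF v f && evalF v g
  | FOr f g => evalF v f || evalF v g
  | FImp f g => implb (evalF v f) (evalF v g)
  end.

Fixpoint depth {A : Type} (p : LB A) : nat :=
  match p with
  | BAtom _ | BBot | BTop => 0
  | BNeg p => depth p
  | BAnd p q | BOr p q | BImp p q => Nat.max (depth p) (depth q)
  | BBox p => S (depth p)
  end.

(* causal rules phi |> psi are pairs (phi, psi); a causal theory is a set of them *)
Definition crule (A : Type) := (LF A * LF A)%type.
Definition ctheory (A : Type) := crule A -> Prop.

(* Sequent sides are (possibly infinite) sets of L_Box formulas. *)
Definition fset (A : Type) := LB A -> Prop.
Definition empty {A : Type} : fset A := fun _ => False.
Definition single {A : Type} (p : LB A) : fset A := fun x => x = p.
Definition union {A : Type} (X Y : fset A) : fset A := fun x => X x \/ Y x.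
Definition add {A : Type} (X : fset A) (p : LB A) : fset A := union X (single p).
Definition subset {A : Type} (X Y : fset A) : Prop := forall x, X x -> Y x.

Fixpoint bigAnd {A : Type} (l : list (LF A)) : LF A :=
  match l with
  | [] => FTop
  | [f] => f
  | f :: l => FAnd f (bigAnd l)
  end.

Definition heads {A : Type} (l : list (crule A)) : fset A :=
  fun x => exists r, In r l /\ x = emb (fst r).
Definition tails {A : Type} (l : list (crule A)) : fset A :=
  fun x => exists r, In r l /\ x = emb (snd r).

(* The calculus, with box rules restricted to Box p with depth p < n and the
   side condition "psi_1,...,psi_k |- p is derivable" supplied by an oracle O. *)
Inductive DerivO {A : Type} (Th : ctheory A) (n : nat)
    (O : fset A -> LB A -> Prop) : fset A -> fset A -> Prop :=
| d_ax : forall p, DerivO Th n O (single p) (single p)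
| d_bot : DerivO Th n O (single BBot) empty
| d_top : DerivO Th n O empty (single BTop)
| d_weak : forall G D G' D', DerivO Th n O G D -> subset G G' -> subset D D' ->
    DerivO Th n O G' D'
| d_negL : forall G D p, DerivO Th n O G (add D p) -> DerivO Th n O (add G (BNeg p)) D
| d_negR : forall G D p, DerivO Th n O (add G p) D -> DerivO Th n O G (add D (BNeg p))
| d_andL : forall G D p q, DerivO Th n O (add (add G p) q) D ->
    DerivO Th n O (add G (BAnd p q)) D
| d_andR : forall G D p q, DerivO Th n O G (add D p) -> DerivO Th n O G (add D q) ->
    DerivO Th n O G (add D (BAnd p q))
| d_orL : forall G D p q, DerivO Th n O (add G p) D -> DerivO Th n O (add G q) D ->
    DerivO Th n O (add G (BOr p q)) D
| d_orR : forall G D p q, DerivO Th n O G (add (add D p) q) ->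
    DerivO Th n O G (add D (BOr p q))
| d_impL : forall G D p q, DerivO Th n O G (add D p) -> DerivO Th n O (add G q) D ->
    DerivO Th n O (add G (BImp p q)) D
| d_impR : forall G D p q, DerivO Th n O (add G p) (add D q) ->
    DerivO Th n O G (add D (BImp p q))
| d_boxR : forall G D p (l : list (crule A)),
    depth p < n -> Forall Th l -> O (tails l) p ->
    DerivO Th n O G (add D (emb (bigAnd (map fst l)))) ->
    DerivO Th n O G (add D (BBox p))
| d_boxL : forall G D p,
    depth p < n ->
    (forall l : list (crule A), Forall Th l -> O (tails l) p ->
        DerivO Th n O (union G (heads l)) D) ->
    DerivO Th n O (add G (BBox p)) D
| d_cut : forall G D G' D' p,
    DerivO Th n O G (add D p) -> DerivO Th n O (add G' p) D' ->
    DerivO Th n O (union G G') (union D D').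

(* Orc n Psi q (for depth q < n) : "Psi |- q is derivable", computed at level depth q. *)
Fixpoint Orc {A : Type} (Th : ctheory A) (n : nat) : fset A -> LB A -> Prop :=
  match n with
  | 0 => fun _ _ => False
  | S m => fun Psi q =>
      if Nat.ltb (depth q) m then Orc Th m Psi q
      else depth q = m /\ DerivO Th m (Orc Th m) Psi (single q)
  end.

Definition Derivable {A : Type} (Th : ctheory A) (G D : fset A) : Prop :=
  exists n, DerivO Th n (Orc Th n) G D.

Definition modelSet {A : Type} (v : A -> bool) : fset A :=
  fun x => exists f, x = emb f /\ evalF v f = true.

(* Say that a set of premises G *decides* p when either G |- p or G, p |- is
   derivable.  The argument never inspects the oracle that supplies the side
   conditions of the box rules, so we work with the calculus at an arbitrary
   level n and an arbitrary oracle O.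
   1. Deciding is preserved by the connectives, for any premise set G: this
      is just the classical sequent rules (negL/negR, andL/andR, ...).
   2. A model M decides atoms and constants, since M contains each atom or
      its negation.
   3. M decides Box p: either some finite set of rules phi_i |> psi_i passes
      the oracle test for p and has all phi_i true in M, so boxR proves
      Box p; or every such set has some phi_i false in M, so M contains
      ~phi_i and every premise of boxL closes by a contradiction.
   By induction on p, M decides every p of depth below n; taking
   n = depth p + 1 and the canonical oracle gives the theorem, the refutation
   M, p |- becoming M |- ~p by negR. *)
From Stdlib Require Import List Lia Classical.

Ltac sets := unfold subset, add, union, single, empty; intros; cbv beta in *;
  repeat match goal with
         | H : _ \/ _ |- _ => destruct H
         | H : False |- _ => destruct H
         end; subst; auto.

Ltac weaken_from H := refine (d_weak _ _ _ _ _ _ _ H _ _); sets.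

Section Deciding.
Variables (A : Type) (Th : ctheory A) (n : nat) (O : fset A -> LB A -> Prop).
Notation D := (DerivO Th n O).

Definition decides (G : fset A) (p : LB A) : Prop :=
  D G (single p) \/ D (add G p) empty.

Lemma derive_member (G : fset A) x : G x -> D G (single x).
Proof. intro Hx. apply d_weak with (G := single x) (D := single x); [apply d_ax | sets | sets]. Qed.

Lemma refute_contradiction (G : fset A) x : G x -> G (BNeg x) -> D G empty.
Proof.
  intros Hx Hnx. assert (Hneg : D (add (single x) (BNeg x)) empty).
  { apply d_negL. weaken_from (d_ax Th n O x). }
  weaken_from Hneg.
Qed.

Lemma derive_neg (G : fset A) p : D (add G p) empty -> D G (single (BNeg p)).
Proof. intro H. weaken_from (d_negR Th n O _ empty p H). Qed.

Lemma decides_neg G p : decides G p -> decides G (BNeg p).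
Proof.
  intros [H | H].
  - right. apply d_negL. weaken_from H.
  - left. now apply derive_neg.
Qed.

Lemma decides_and G p q : decides G p -> decides G q -> decides G (BAnd p q).
Proof.
  intros [Hp | Hp] [Hq | Hq].
  - left. assert (H : D G (add empty (BAnd p q))) by (apply d_andR; [weaken_from Hp | weaken_from Hq]).
    weaken_from H.
  - right. apply d_andL. weaken_from Hq.
  - right. apply d_andL. weaken_from Hp.
  - right. apply d_andL. weaken_from Hp.
Qed.

Lemma decides_or G p q : decides G p -> decides G q -> decides G (BOr p q).
Proof.
  intros [Hp | Hp] [Hq | Hq].
  4: right; now apply d_orL.
  all: left; assert (H : D G (add empty (BOr p q)))
         by (apply d_orR; first [solve [weaken_from Hp] | solve [weaken_from Hq]]);
       weaken_from H.
Qed.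

Lemma decides_imp G p q : decides G p -> decides G q -> decides G (BImp p q).
Proof.
  intros [Hp | Hp] [Hq | Hq].
  2: right; apply d_impL; [weaken_from Hp | exact Hq].
  all: left; assert (H : D G (add empty (BImp p q)))
         by (apply d_impR; first [solve [weaken_from Hq] | solve [weaken_from Hp]]);
       weaken_from H.
Qed.

Lemma model_true (v : A -> bool) f : evalF v f = true -> modelSet v (emb f).
Proof. intro Hf. now exists f. Qed.

Lemma model_false (v : A -> bool) f : evalF v f = false -> modelSet v (BNeg (emb f)).
Proof. intro Hf. exists (FNeg f). simpl. now rewrite Hf. Qed.

Lemma model_decides_emb (v : A -> bool) f : decides (modelSet v) (emb f).
Proof.
  destruct (evalF v f) eqn:Hf.
  - left. now apply derive_member, model_true.
  - right. apply refute_contradiction with (x := emb f); [sets | left; now apply model_false].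
Qed.

Lemma bigAnd_false (v : A -> bool) fs :
  evalF v (bigAnd fs) = false -> exists f, In f fs /\ evalF v f = false.
Proof.
  induction fs as [|f [|g fs] IH]; simpl; intro H; try discriminate.
  - exists f; auto.
  - destruct (evalF v f) eqn:Hf; simpl in H.
    + destruct (IH H) as [h [Hin Hh]]. exists h; simpl in *; auto.
    + exists f; auto.
Qed.

(* The box case: either boxR applies with a rule set whose heads hold in M,
   or every boxL premise contains a false head together with its negation. *)
Lemma model_decides_box (v : A -> bool) p : depth p < n -> decides (modelSet v) (BBox p).
Proof.
  intro Hp.
  destruct (classic (exists l, Forall Th l /\ O (tails l) p /\
                               evalF v (bigAnd (map fst l)) = true))
    as [[l [Hl [Hor Htrue]]] | Hnone].
  - left. assert (H : D (modelSet v) (add empty (BBox p))).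
    { apply d_boxR with (l := l); auto.
      assert (Hc := derive_member _ _ (model_true v _ Htrue)). weaken_from Hc. }
    weaken_from H.
  - right. apply d_boxL; auto. intros l Hl Hor.
    assert (Hfalse : evalF v (bigAnd (map fst l)) = false).
    { destruct (evalF v (bigAnd (map fst l))) eqn:E; auto.
      exfalso. apply Hnone. now exists l. }
    destruct (bigAnd_false v _ Hfalse) as [f [Hin Hf]].
    apply in_map_iff in Hin as [r [<- Hr]].
    apply refute_contradiction with (x := emb (fst r)).
    + right. now exists r.
    + left. now apply model_false.
Qed.

Theorem model_decides (v : A -> bool) p : depth p < n -> decides (modelSet v) p.
Proof.
  induction p as [a | | | p IH | p IHp q IHq | p IHp q IHq | p IHp q IHq | p _];
    simpl; intro Hd.
  - exact (model_decides_emb v (FAtom a)).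
  - exact (model_decides_emb v FBot).
  - exact (model_decides_emb v FTop).
  - now apply decides_neg, IH.
  - apply decides_and; [apply IHp | apply IHq]; lia.
  - apply decides_or; [apply IHp | apply IHq]; lia.
  - apply decides_imp; [apply IHp | apply IHq]; lia.
  - apply model_decides_box. lia.
Qed.

End Deciding.

Theorem mainTheorem13 (A : Type) (Th : ctheory A) (v : A -> bool) (p : LB A) :
  Derivable Th (modelSet v) (single p) \/ Derivable Th (modelSet v) (single (BNeg p)).
Proof.
  set (n := S (depth p)).
  destruct (model_decides A Th n (Orc Th n) v p ltac:(unfold n; lia)) as [H | H].
  - left. now exists n.
  - right. exists n. now apply derive_neg.
Qed.
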